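(* Let $\lambda\in[0,1]$. For every $\alpha$ with $1\le\alpha<\frac{2(1-\lambda)}{2\lambda+1}$, there exists an instance with the weighted single metric loss with parameter $\lambda$ in which no clustering is in the $\alpha$-core.
   Context: Instance: finite nonempty set $\mathcal{N}$ of $n$ agents, finite nonempty set $\mathcal{M}$ of feasible centers, positive integer $k$, pseudometric $d$ on $\mathcal{N}\cup\mathcal{M}$. Weighted single metric loss: $\ell_i(C,x)=\lambda\max_{j\in C}d(i,j)+(1-\lambda)d(i,x)$ for $i\in C\subseteq\mathcal{N}$, $x\in\mathcal{M}$. A clustering is $\mathcal{X}=\{(C_1,x_1),\dots,(C_k,x_k)\}$ with $C_t$ pairwise disjoint (some possibly empty), union $\mathcal{N}$, $x_t\in\mathcal{M}$; $\ell_i(\mathcal{X})=\ell_i(C_t,x_t)$ where $i\in C_t$. For $\alpha\ge1$, $\mathcal{X}$ is in the $\alpha$-core if there is no $S\subseteq\mathcal{N}$ with $|S|\ge n/k$ and $y\in\mathcal{M}$ with $\alpha\,\ell_i(S,y)<\ell_i(\mathcal{X})$ for all $i\in S$. *)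

From HB Require Import structures.
From mathcomp Require Import all_boot all_order all_algebra.
Set Implicit Arguments. Unset Strict Implicit. Unset Printing Implicit Defensive.
Import Order.TTheory GRing.Theory Num.Theory.
Local Open Scope ring_scope.

Definition pseudometric (R : realDomainType) (T : Type) (d : T -> T -> R) : Prop :=
  (forall x, d x x = 0) /\
  (forall x y, 0 <= d x y) /\
  (forall x y, d x y = d y x) /\
  (forall x y z, d x z <= d x y + d y z).

(* Weighted single metric loss  l_i(C,x) = lam * max_{j in C} d(i,j) + (1-lam) d(i,x).
   (The max is taken with default 0; since d >= 0 and i \in C this is the true max.) *)
Definition wloss (R : realDomainType) (N M : finType) (d : N + M -> N + M -> R)
  (lam : R) (C : {set N}) (x : M) (i : N) : R :=
  lam * (\big[Num.max/0]_(j in C) d (inl i) (inl j)) + (1 - lam) * d (inl i) (inr x).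

(* A clustering with k (possibly empty) clusters: agent i is in cluster a i,
   cluster t is C_t = [set j | a j == t] with center x t. *)
Definition cluster (N : finType) (k : nat) (a : N -> 'I_k) (t : 'I_k) : {set N} :=
  [set j | a j == t].

Definition closs (R : realDomainType) (N M : finType) (d : N + M -> N + M -> R)
  (lam : R) (k : nat) (a : N -> 'I_k) (x : 'I_k -> M) (i : N) : R :=
  wloss d lam (cluster a (a i)) (x (a i)) i.

Definition in_core (R : realFieldType) (N M : finType) (d : N + M -> N + M -> R)
  (lam alpha : R) (k : nat) (a : N -> 'I_k) (x : 'I_k -> M) : Prop :=
  ~ exists (S : {set N}) (y : M),
      ((#|N|%:R / k%:R : R) <= #|S|%:R) /\
      (forall i, i \in S -> alpha * wloss d lam S y i < closs d lam a x i).

(* Take two far-apart copies of a cycle of three agents a_0, a_1, a_2 and three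
   centers c_0, c_1, c_2, where a_i is at distance 1, 2, 4 from c_i, c_(i-1),
   c_(i-2) and two agents (or two centers) are at distance 3.  With k = 3
   clusters, some copy contains at most one opened center, say c_j.  The
   coalition {a_(j+1), a_(j+2)}, of size n/k = 2, then deviates to c_(j+1): an
   agent at distance D from c_(j+1) pays at most (2 lam + 1) D there, while it
   pays at least 2 (1 - lam) D in the clustering, because c_j and the other copy
   are at distance at least 2 D from it. *)

From HB Require Import structures.
From mathcomp Require Import all_boot all_order all_algebra.
From mathcomp Require Import zify ring lra.
Import Order.TTheory GRing.Theory Num.Theory.

Set Implicit Arguments. Unset Strict Implicit. Unset Printing Implicit Defensive.

Local Open Scope ring_scope.

Lemma pseudometric_natr (R : realDomainType) (T : Type) (dn : T -> T -> nat) :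
  (forall x, dn x x = 0%N) -> (forall x y, dn x y = dn y x) ->
  (forall x y z, (dn x z <= dn x y + dn y z)%N) ->
  pseudometric (fun x y => (dn x y)%:R : R).
Proof.
move=> dn0 dnC dn_tri; split; [|split; [|split]] => [x|x y|x y|x y z].
- by rewrite dn0.
- exact: ler0n.
- by rewrite dnC.
- by rewrite -natrD ler_nat.
Qed.

Section WeightedLoss.

Variables (R : realFieldType) (N M : finType) (d : N + M -> N + M -> R).
Variable lam : R.
Hypothesis lam_ge0 : 0 <= lam.
Hypothesis lam_le1 : lam <= 1.

Lemma wloss_le (C : {set N}) (y : M) (i : N) (D : R) : 0 <= D ->
  {in C, forall j, d (inl i) (inl j) <= D} ->
  wloss d lam C y i <= lam * D + (1 - lam) * d (inl i) (inr y).
Proof.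
by move=> D_ge0 dC; rewrite lerD2r ler_wpM2l // bigmax_le.
Qed.

Lemma wloss_ge (C : {set N}) (y : M) (i : N) :
  (1 - lam) * d (inl i) (inr y) <= wloss d lam C y i.
Proof.
by rewrite /wloss lerDr mulr_ge0 // bigmax_ge_id.
Qed.

Lemma deviation_lt_closs (alpha : R) (k : nat) (a : N -> 'I_k) (x : 'I_k -> M)
    (S : {set N}) (y : M) (i : N) :
  0 <= alpha -> alpha * (2 * lam + 1) < 2 * (1 - lam) ->
  0 < d (inl i) (inr y) ->
  {in S, forall j, d (inl i) (inl j) <= 3 * d (inl i) (inr y)} ->
  2 * d (inl i) (inr y) <= d (inl i) (inr (x (a i))) ->
  alpha * wloss d lam S y i < closs d lam a x i.
Proof.
move=> alpha_ge0 margin; set D := d (inl i) (inr y) => D_gt0 diamS gap.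
have lossS : wloss d lam S y i <= (2 * lam + 1) * D.
  have -> : (2 * lam + 1) * D = lam * (3 * D) + (1 - lam) * D by ring.
  by apply: wloss_le => //; rewrite mulr_ge0 // ltW.
have lossC : (1 - lam) * (2 * D) <= closs d lam a x i.
  by apply: le_trans (wloss_ge _ _ _); rewrite ler_wpM2l // subr_ge0.
apply: le_lt_trans (ler_wpM2l alpha_ge0 lossS) (lt_le_trans _ lossC).
by rewrite 2!mulrA [(1 - lam) * 2]mulrC ltr_pM2r.
Qed.

End WeightedLoss.

Lemma few_centers_sparse_copy (T : finType) (t0 : T) (k : nat)
    (x : 'I_k -> bool * T) :
  (k <= 3)%N -> exists g j, forall t, (x t).1 = g -> x t = (g, j).
Proof.
move=> k_le3; set X := [set x t | t : 'I_k].
pose opened g := X :&: [set c | c.1 == g].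
have [g opened_le1] : exists g, (#|opened g| <= 1)%N.
  have opened_split : (#|opened true| + #|opened false| = #|X|)%N.
    rewrite -(cardsID [set c | c.1] X); congr (_ + _)%N; apply: eq_card => c.
      by rewrite !inE eqb_id.
    by rewrite !inE eqbF_neg andbC.
  have : (#|opened true| + #|opened false| <= 3)%N.
    by rewrite opened_split (leq_trans (leq_imset_card _ _)) // card_ord.
  case: (leqP #|opened true| 1) => [|true_gt1 sum_le3]; first by exists true.
  by exists false; lia.
exists g.
have opened_x t : (x t).1 = g -> x t \in opened g.
  by move=> xt; rewrite !inE imset_f //= xt.
case: (pickP [pred t | (x t).1 == g]) => [t1 /eqP xt1 | none]; last first.
  by exists t0 => t xt; have := none t; rewrite /= xt eqxx.
exists (x t1).2 => t xt.
have -> : x t = x t1.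
  exact: card_le1_eqP opened_le1 _ _ (opened_x t1 xt1) (opened_x t xt).
by rewrite -xt1; case: (x t1).
Qed.

Notation site := (bool * 'I_3)%type.

Definition agent_center_dist (i j : 'I_3) : nat :=
  if i == j then 1 else if i == ordS j then 2 else 4.

Definition local_dist (u v : 'I_3 + 'I_3) : nat :=
  match u, v with
  | inl i, inl j | inr i, inr j => if i == j then 0 else 3
  | inl i, inr j | inr j, inl i => agent_center_dist i j
  end.

Definition copy (u : site + site) : bool :=
  match u with inl (g, _) | inr (g, _) => g end.

Definition position (u : site + site) : 'I_3 + 'I_3 :=
  match u with inl (_, i) => inl i | inr (_, j) => inr j end.

Definition distn (u v : site + site) : nat :=
  if copy u == copy v then local_dist (position u) (position v) else 8.

Lemma local_dist_le4 u v : (local_dist u v <= 4)%N.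
Proof.
by case: u v => [i|i] [j|j] /=; rewrite /agent_center_dist; do 2?case: eqP.
Qed.

Lemma local_dist_triangle u v w :
  (local_dist u w <= local_dist u v + local_dist v w)%N.
Proof. by move: u v w; do 3!case=> [[[|[|[|//]]] ?]|[[|[|[|//]]] ?]]. Qed.

Lemma distn0 u : distn u u = 0%N.
Proof. by rewrite /distn eqxx; case: u => [[g i]|[g i]] /=; rewrite eqxx. Qed.

Lemma distnC u v : distn u v = distn v u.
Proof.
rewrite /distn eq_sym; case: eqP => // _.
by case: u v => [[g i]|[g i]] [[h j]|[h j]] //=; rewrite eq_sym.
Qed.

Lemma distn_triangle u v w : (distn u w <= distn u v + distn v w)%N.
Proof.
rewrite /distn; have := local_dist_le4 (position u) (position w).
have := local_dist_triangle (position u) (position v) (position w).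
by case: (copy u) (copy v) (copy w) => [] [] [] //=; lia.
Qed.

Lemma distn_agent_center_gt0 p q : (0 < distn (inl p) (inr q))%N.
Proof.
by case: p q => g i [h j]; rewrite /distn /= /agent_center_dist; do 3?case: eqP.
Qed.

Lemma distn_agents_le3 p q : p.1 = q.1 -> (distn (inl p) (inl q) <= 3)%N.
Proof. by case: p q => g i [h j] /= ->; rewrite /distn /= eqxx; case: eqP. Qed.

Definition coalition (g : bool) (j : 'I_3) : {set site} :=
  [set (g, ordS j); (g, ordS (ordS j))].

Lemma card_coalition g j : #|coalition g j| = 2%N.
Proof. by rewrite cards2 xpair_eqE eqxx; case: j => [[|[|[|]]] ?]. Qed.

Lemma coalition_copy g j p : p \in coalition g j -> p.1 = g.
Proof. by case/set2P=> ->. Qed.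

Lemma coalition_gap g j p c : p \in coalition g j -> (c.1 = g -> c = (g, j)) ->
  (2 * distn (inl p) (inr (g, ordS j)) <= distn (inl p) (inr c))%N.
Proof.
case: c => h c /set2P[]-> /=; rewrite /distn /= eqxx;
  case: eqP => [<- /(_ erefl) [->] | _ _]; by case: j => [[|[|[|]]] ?].
Qed.

Theorem mainTheorem10 (R : realFieldType) (lam : R) :
  0 <= lam <= 1 ->
  forall alpha : R, 1 <= alpha -> alpha < 2 * (1 - lam) / (2 * lam + 1) ->
  exists (N M : finType) (k : nat) (d : N + M -> N + M -> R),
    [/\ (0 < #|N|)%N, (0 < #|M|)%N, (0 < k)%N, pseudometric d &
      forall (a : N -> 'I_k) (x : 'I_k -> M), ~ in_core d lam alpha a x].
Proof.
move=> /andP[lam_ge0 lam_le1] alpha alpha_ge1 alpha_lt.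
have margin : alpha * (2 * lam + 1) < 2 * (1 - lam).
  by rewrite -ltr_pdivlMr //; lra.
pose d u v : R := (distn u v)%:R.
have card_site : #|{: site}| = 6%N by rewrite card_prod card_bool card_ord.
exists site, site, 3%N, d; split; rewrite ?card_site //.
  exact: pseudometric_natr distn0 distnC distn_triangle.
move=> a x; apply; have [g [j own]] := few_centers_sparse_copy ord0 x (leqnn 3).
exists (coalition g j), (g, ordS j); split.
  by rewrite card_site card_coalition ler_pdivrMr ?ltr0n // -natrM ler_nat.
move=> p pS; apply: deviation_lt_closs => //.
- lra.
- by rewrite ltr0n distn_agent_center_gt0.
- move=> q qS; rewrite -natrM ler_nat.
  apply: leq_trans (leq_pmulr 3 (distn_agent_center_gt0 _ _)).
  by apply: distn_agents_le3; rewrite (coalition_copy pS) (coalition_copy qS).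
- by rewrite -natrM ler_nat (coalition_gap pS (own _)).
Qed.
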